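(* Let $X_N\in\mathbb{R}^{N\times M}$ (rows $x_n^\top$), $Y_N\in\mathbb{R}^N$, test vector $x\in\mathbb{R}^M$, $\lambda>0$, $\sigma>0$, and luckiness $w(\theta)=\exp\{-\frac{\lambda}{2\sigma^2}\|\theta\|^2\}$. Let $P_\lambda=(X_N^\top X_N+\lambda I)^{-1}$, $K_\lambda=1+x^\top P_\lambda x$, $\hat\theta_\lambda=P_\lambda X_N^\top Y_N$, and for $y\in\mathbb{R}$ let $\hat\theta_y=\arg\min_\theta\big[\sum_{n=1}^N(y_n-\theta^\top x_n)^2+(y-\theta^\top x)^2+\lambda\|\theta\|^2\big]$. Define $$\hat\mu=\frac{\lambda K_\lambda\,\hat\theta_\lambda^\top P_\lambda x}{1+\lambda x^\top P_\lambda^2x},\quad \hat\sigma^2=\frac{\sigma^2K_\lambda^2}{1+\lambda x^\top P_\lambda^2x},\quad c=\exp\Big\{\frac{1}{2\sigma^2}\Big[\frac{(\lambda\hat\theta_\lambda^\top P_\lambda x)^2}{1+\lambda x^\top P_\lambda^2x}-\lambda\|\hat\theta_\lambda\|^2\Big]\Big\}.$$ Then for all $y\in\mathbb{R}$, $$p_{\hat\theta_y}(y\mid x)\,w(\hat\theta_y)=\frac{c}{\sqrt{2\pi\sigma^2}}\exp\Big\{-\frac{1}{2\hat\sigma^2}\big(y-\hat\theta_\lambda^\top x+\hat\mu\big)^2\Big\}.$$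
   Context: $p_\theta(y\mid x)=\frac{1}{\sqrt{2\pi\sigma^2}}\exp\{-\frac{1}{2\sigma^2}(y-\theta^\top x)^2\}$. *)

From HB Require Import structures.
From mathcomp Require Import all_boot all_order all_algebra.
From mathcomp Require Import all_classical all_reals all_analysis.
Set Implicit Arguments. Unset Strict Implicit. Unset Printing Implicit Defensive.
Import Order.TTheory GRing.Theory Num.Theory.
Local Open Scope ring_scope.

Section Defs.
Variable R : realType.

Definition dotc (M : nat) (u v : 'cV[R]_M) : R := (u^T *m v) 0 0.

Definition gauss_density (M : nat) (sigma : R) (theta : 'cV[R]_M) (y : R) (x : 'cV[R]_M) : R :=
  (Num.sqrt (2 * pi * sigma ^+ 2))^-1 *
  expR (- ((2 * sigma ^+ 2)^-1 * (y - dotc theta x) ^+ 2)).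

Definition luck (M : nat) (lambda sigma : R) (theta : 'cV[R]_M) : R :=
  expR (- (lambda / (2 * sigma ^+ 2) * dotc theta theta)).

Definition Plam (N M : nat) (X : 'M[R]_(N, M)) (lambda : R) : 'M[R]_M :=
  invmx (X^T *m X + lambda%:M).

Definition ridge_obj (N M : nat) (X : 'M[R]_(N, M)) (Y : 'cV[R]_N) (x : 'cV[R]_M)
  (lambda y : R) (theta : 'cV[R]_M) : R :=
  \sum_(n < N) (Y n 0 - (X *m theta) n 0) ^+ 2 + (y - dotc theta x) ^+ 2
  + lambda * dotc theta theta.

Definition Klam N M (X : 'M[R]_(N, M)) (x : 'cV[R]_M) lambda : R :=
  1 + dotc x (Plam X lambda *m x).

Definition theta_lam N M (X : 'M[R]_(N, M)) (Y : 'cV[R]_N) lambda : 'cV[R]_M :=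
  Plam X lambda *m X^T *m Y.

Definition Dlam N M (X : 'M[R]_(N, M)) (x : 'cV[R]_M) lambda : R :=
  1 + lambda * dotc x (Plam X lambda *m Plam X lambda *m x).

Definition mu_hat N M (X : 'M[R]_(N, M)) Y (x : 'cV[R]_M) lambda : R :=
  lambda * Klam X x lambda * dotc (theta_lam X Y lambda) (Plam X lambda *m x)
  / Dlam X x lambda.

Definition sigma2_hat N M (X : 'M[R]_(N, M)) (x : 'cV[R]_M) lambda sigma : R :=
  sigma ^+ 2 * Klam X x lambda ^+ 2 / Dlam X x lambda.

Definition c_const N M (X : 'M[R]_(N, M)) Y (x : 'cV[R]_M) lambda sigma : R :=
  expR ((2 * sigma ^+ 2)^-1 *
    ((lambda * dotc (theta_lam X Y lambda) (Plam X lambda *m x)) ^+ 2 / Dlam X x lambda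
     - lambda * dotc (theta_lam X Y lambda) (theta_lam X Y lambda))).

End Defs.

From HB Require Import structures.
From mathcomp Require Import all_boot all_order all_algebra.
From mathcomp Require Import all_classical all_reals all_analysis.
From mathcomp Require Import ring lra.
Import Order.TTheory GRing.Theory Num.Theory.
Local Open Scope ring_scope.

(* The ridge objective is a strictly convex quadratic, so its minimiser
   theta_y solves the normal equation (X^T X + lambda I) theta_y = X^T Y + e x
   with e = y - theta_y^T x.  Hence theta_y = theta_lambda + e P x, which gives
   y - theta_lambda^T x = e K and ||theta_y||^2 = ||theta_lambda||^2
   + 2 e theta_lambda^T P x + e^2 x^T P^2 x.  Substituting e = (y -
   theta_lambda^T x) / K turns the sum of the two exponents into a quadratic
   in y; completing the square yields mu_hat, sigma2_hat and c. *)

Section Dotc.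
Context {R : realType} {M : nat}.
Implicit Types u v w : 'cV[R]_M.

Lemma dotcE u v : dotc u v = \sum_i u i 0 * v i 0.
Proof. by rewrite /dotc mxE; apply: eq_bigr => i _; rewrite mxE. Qed.

Lemma dotcC u v : dotc u v = dotc v u.
Proof. by rewrite !dotcE; apply: eq_bigr => i _; rewrite mulrC. Qed.

Lemma dotc0r u : dotc u 0 = 0.
Proof. by rewrite dotcE big1 // => i _; rewrite mxE mulr0. Qed.

Lemma dotcDr u v w : dotc u (v + w) = dotc u v + dotc u w.
Proof. by rewrite !dotcE -big_split; apply: eq_bigr => i _; rewrite mxE mulrDr. Qed.

Lemma dotcBr u v w : dotc u (v - w) = dotc u v - dotc u w.
Proof. by rewrite !dotcE -sumrB; apply: eq_bigr => i _; rewrite !mxE mulrBr. Qed.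

Lemma dotcZr a u v : dotc u (a *: v) = a * dotc u v.
Proof.
by rewrite !dotcE mulr_sumr; apply: eq_bigr => i _; rewrite mxE mulrCA.
Qed.

Lemma dotcDl u v w : dotc (v + w) u = dotc v u + dotc w u.
Proof. by rewrite dotcC dotcDr !(dotcC u). Qed.

Lemma dotcZl a u v : dotc (a *: v) u = a * dotc v u.
Proof. by rewrite dotcC dotcZr dotcC. Qed.

Lemma dotc_ge0 u : 0 <= dotc u u.
Proof. by rewrite dotcE; apply: sumr_ge0 => i _; rewrite -expr2 sqr_ge0. Qed.

Lemma dotc_eq0 u : dotc u u = 0 -> u = 0.
Proof.
rewrite dotcE => u0; apply/matrixP => i j; rewrite (ord1 j) mxE.
have /psumr_eq0P ui0 : \sum_(k < M) u k 0 * u k 0 = 0 by [].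
by apply/eqP; rewrite -sqrf_eq0 expr2 ui0 // => k _; rewrite -expr2 sqr_ge0.
Qed.

Lemma dotc_normDZ u v t :
  dotc (u + t *: v) (u + t *: v) = dotc u u + 2 * t * dotc u v + t ^+ 2 * dotc v v.
Proof. rewrite !(dotcDl, dotcDr, dotcZl, dotcZr) (dotcC v u); ring. Qed.

End Dotc.

Lemma dotc_mulmxl (R : realType) (N M : nat) (A : 'M[R]_(N, M)) u v :
  dotc (A *m u) v = dotc u (A^T *m v).
Proof. by rewrite /dotc trmx_mul mulmxA. Qed.

Lemma quadratic_ge0_lin_eq0 (R : realFieldType) (b c : R) :
  (forall t, 0 <= 2 * t * b + t ^+ 2 * c) -> b = 0.
Proof.
move=> hq; set m := `|c| + 1.
have m_gt0 : 0 < m by rewrite ltr_wpDl.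
have c_lt : c < 2 * m.
  rewrite /m; case: (lerP 0 c) => c0.
  - by rewrite ger0_norm //; lra.
  - by rewrite ltr0_norm //; lra.
have := hq (- b / m).
have -> : 2 * (- b / m) * b + (- b / m) ^+ 2 * c = b ^+ 2 * (c - 2 * m) / m ^+ 2.
  by field; rewrite gt_eqF.
rewrite pmulr_lge0 ?invr_gt0 ?exprn_gt0 // => h.
by apply/eqP; rewrite -sqrf_eq0 eq_le sqr_ge0 andbT; nra.
Qed.

Definition ridge_gram {R : realType} {N M : nat} (X : 'M[R]_(N, M)) (lambda : R)
  : 'M[R]_M := X^T *m X + lambda%:M.

(* Half the gradient of the ridge objective at theta. *)
Definition ridge_grad {R : realType} {N M : nat} (X : 'M[R]_(N, M)) (Y : 'cV[R]_N)
  (x : 'cV[R]_M) (lambda y : R) (theta : 'cV[R]_M) : 'cV[R]_M :=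
  ridge_gram X lambda *m theta - X^T *m Y - (y - dotc theta x) *: x.

Section Ridge.
Context {R : realType} {N M : nat} {X : 'M[R]_(N, M)} {lambda : R}.
Hypothesis lambda_gt0 : 0 < lambda.

Local Notation ridge_gram := (ridge_gram X lambda).

Lemma trmx_ridge_gram : ridge_gram^T = ridge_gram.
Proof. by rewrite /ridge_gram linearD /= trmx_mul trmxK tr_scalar_mx. Qed.

Lemma dotc_ridge_gram u v :
  dotc u (ridge_gram *m v) = dotc (X *m u) (X *m v) + lambda * dotc u v.
Proof. by rewrite mulmxDl dotcDr mul_scalar_mx dotcZr -mulmxA -dotc_mulmxl. Qed.

Lemma dotc_ridge_gram_ge0 u : 0 <= dotc u (ridge_gram *m u).
Proof. by rewrite dotc_ridge_gram addr_ge0 ?mulr_ge0 ?dotc_ge0 ?ltW. Qed.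

Lemma ridge_gram_inj (u : 'cV[R]_M) : ridge_gram *m u = 0 -> u = 0.
Proof.
move=> Au0; apply: dotc_eq0; apply/eqP; rewrite eq_le dotc_ge0 andbT.
rewrite -(ler_pM2l lambda_gt0) mulr0 -(lerD2l (dotc (X *m u) (X *m u))) addr0.
by rewrite -dotc_ridge_gram Au0 dotc0r dotc_ge0.
Qed.

Lemma ridge_gram_unit : ridge_gram \in unitmx.
Proof.
rewrite -row_free_unit -kermx_eq0; apply/eqP/row_matrixP => i; rewrite row0.
apply: trmx_inj; rewrite trmx0; apply: ridge_gram_inj.
by rewrite -{1}trmx_ridge_gram -trmx_mul -row_mul mulmx_ker row0 trmx0.
Qed.

Lemma mulmx_ridge_gram_Plam : ridge_gram *m Plam X lambda = 1%:M.
Proof. exact: (mulmxV ridge_gram_unit). Qed.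

Lemma trmx_Plam : (Plam X lambda)^T = Plam X lambda.
Proof. by rewrite /Plam trmx_inv trmx_ridge_gram. Qed.

Lemma dotc_Plam_ge0 x : 0 <= dotc x (Plam X lambda *m x).
Proof.
rewrite -{1}[x]mul1mx -mulmx_ridge_gram_Plam -mulmxA dotc_mulmxl.
by rewrite trmx_ridge_gram dotc_ridge_gram_ge0.
Qed.

Context {Y : 'cV[R]_N} {x : 'cV[R]_M} {y : R}.

Local Notation ridge_grad := (ridge_grad X Y x lambda y).

Lemma ridge_objE theta : ridge_obj X Y x lambda y theta =
  dotc (Y - X *m theta) (Y - X *m theta) + (y - dotc theta x) ^+ 2
  + lambda * dotc theta theta.
Proof.
rewrite /ridge_obj [dotc (Y - _) _]dotcE.
by congr (_ + _ + _); apply: eq_bigr => i _; rewrite !mxE expr2.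
Qed.

Lemma ridge_gradE theta : ridge_grad theta =
  lambda *: theta - X^T *m (Y - X *m theta) - (y - dotc theta x) *: x.
Proof.
rewrite /ridge_grad /ridge_gram mulmxDl mul_scalar_mx mulmxBr -mulmxA.
by congr (_ - _); rewrite opprB addrCA addrA.
Qed.

Lemma ridge_obj_shift theta v t :
  ridge_obj X Y x lambda y (theta + t *: v) =
  ridge_obj X Y x lambda y theta + 2 * t * dotc v (ridge_grad theta)
  + t ^+ 2 * (dotc (X *m v) (X *m v) + dotc v x ^+ 2 + lambda * dotc v v).
Proof.
rewrite !ridge_objE ridge_gradE.
have -> : Y - X *m (theta + t *: v) = (Y - X *m theta) + (- t) *: (X *m v).
  by rewrite mulmxDr -scalemxAr scaleNr opprD addrA.
rewrite !dotc_normDZ (dotcDl x) dotcZl !(dotcBr v) !dotcZr -dotc_mulmxl.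
rewrite (dotcC theta v) (dotcC (X *m v)); ring.
Qed.

Lemma ridge_argmin_grad theta :
  (forall theta', ridge_obj X Y x lambda y theta <= ridge_obj X Y x lambda y theta') ->
  ridge_grad theta = 0.
Proof.
move=> hmin; set g := ridge_grad theta; apply: dotc_eq0.
apply: (@quadratic_ge0_lin_eq0 _ _
  (dotc (X *m g) (X *m g) + dotc g x ^+ 2 + lambda * dotc g g)) => t.
by have := hmin (theta + t *: g); rewrite ridge_obj_shift -addrA lerDl.
Qed.

Lemma ridge_argmin_rank1 theta :
  (forall theta', ridge_obj X Y x lambda y theta <= ridge_obj X Y x lambda y theta') ->
  theta = theta_lam X Y lambda + (y - dotc theta x) *: (Plam X lambda *m x).
Proof.
move=> /ridge_argmin_grad /eqP; rewrite subr_eq0 subr_eq => /eqP normal_eq.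
rewrite -{1}[theta]mul1mx -(mulVmx ridge_gram_unit) -mulmxA normal_eq.
by rewrite mulmxDr addrC scalemxAr /theta_lam mulmxA.
Qed.

End Ridge.

Theorem lemma1 (R : realType) (N M : nat) (X : 'M[R]_(N, M)) (Y : 'cV[R]_N)
  (x : 'cV[R]_M) (lambda sigma : R) (hlambda : 0 < lambda) (hsigma : 0 < sigma)
  (y : R) (theta_y : 'cV[R]_M)
  (hmin : forall theta : 'cV[R]_M,
            ridge_obj X Y x lambda y theta_y <= ridge_obj X Y x lambda y theta) :
  gauss_density sigma theta_y y x * luck lambda sigma theta_y =
  c_const X Y x lambda sigma / Num.sqrt (2 * pi * sigma ^+ 2) *
  expR (- ((2 * sigma2_hat X x lambda sigma)^-1 *
           (y - dotc (theta_lam X Y lambda) x + mu_hat X Y x lambda) ^+ 2)).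
Proof.
set P := Plam X lambda; set th := theta_lam X Y lambda; set e := y - dotc theta_y x.
have theta_yE : theta_y = th + e *: (P *m x) := ridge_argmin_rank1 hlambda _ hmin.
have k_ge0 : 0 <= dotc x (P *m x) := dotc_Plam_ge0 hlambda x.
have s_ge0 : 0 <= dotc (P *m x) (P *m x) := dotc_ge0 _.
have K_gt0 : 0 < 1 + dotc x (P *m x) by lra.
have D_gt0 : 0 < 1 + lambda * dotc (P *m x) (P *m x).
  by have := mulr_ge0 (ltW hlambda) s_ge0; lra.
have DlamE : Dlam X x lambda = 1 + lambda * dotc (P *m x) (P *m x).
  have trP : P^T = P := trmx_Plam.
  by rewrite /Dlam -/P -mulmxA -{1}trP -dotc_mulmxl.
have residualE : y - dotc th x = e * Klam X x lambda.
  have eE : e = y - dotc theta_y x by [].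
  rewrite /Klam -/P; move: eE; rewrite {1}theta_yE dotcDl dotcZl (dotcC (P *m x)).
  lra.
rewrite /gauss_density /luck /c_const /sigma2_hat /mu_hat DlamE -/th residualE.
rewrite -/e {1 2}theta_yE dotc_normDZ /Klam -/P.
rewrite -[LHS]mulrA -expRD [RHS]mulrAC -expRD [LHS]mulrC.
congr (expR _ * _); field.
by apply/and3P; split; apply: lt0r_neq0.
Qed.
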